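(* Let $X$ be a real Banach space, let $n\in\mathbb N$, let $S_1,\dots,S_n$ be $w^*$-slices of $B_{X^*}$ and let $\lambda_1,\dots,\lambda_n\in(0,1]$ with $\sum_{i=1}^n\lambda_i=1$. Put $C:=\sum_{i=1}^n\lambda_i S_i$ and assume $\operatorname{diam}(C)=2$. Then for every $\varepsilon>0$ there exist $f_i,g_i\in S_i$ ($i=1,\dots,n$) and $x\in S_X$ such that $(f_i-g_i)(x)>2-\varepsilon$ for all $i\in\{1,\dots,n\}$; consequently $f_i(x)>1-\varepsilon$ and $g_i(-x)>1-\varepsilon$ for all $i$.
   Context: A $w^*$-slice of $B_{X^*}$ is a set $S(B_{X^*},x,\alpha)=\{f\in B_{X^*}: f(x)>1-\alpha\}$ with $x\in S_X$ and $0<\alpha<1$. $B$, $S$ denote closed unit ball and unit sphere. *)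

From Stdlib Require Import Reals.
Open Scope R_scope.

Record NormedSpace := {
  carrier :> Type;
  vzero : carrier;
  vadd : carrier -> carrier -> carrier;
  vopp : carrier -> carrier;
  vscal : R -> carrier -> carrier;
  vnorm : carrier -> R;
  vadd_assoc : forall x y z, vadd x (vadd y z) = vadd (vadd x y) z;
  vadd_comm : forall x y, vadd x y = vadd y x;
  vadd_0 : forall x, vadd vzero x = x;
  vadd_opp : forall x, vadd x (vopp x) = vzero;
  vscal_assoc : forall a b x, vscal a (vscal b x) = vscal (a * b) x;
  vscal_1 : forall x, vscal 1 x = x;
  vscal_distr_v : forall a x y, vscal a (vadd x y) = vadd (vscal a x) (vscal a y);
  vscal_distr_s : forall a b x, vscal (a + b) x = vadd (vscal a x) (vscal b x);
  vnorm_eq0 : forall x, vnorm x = 0 -> x = vzero;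
  vnorm_scal : forall a x, vnorm (vscal a x) = Rabs a * vnorm x;
  vnorm_triangle : forall x y, vnorm (vadd x y) <= vnorm x + vnorm y
}.

Arguments vzero {_}. Arguments vadd {_}. Arguments vopp {_}.
Arguments vscal {_}. Arguments vnorm {_}.

Definition complete (X : NormedSpace) : Prop :=
  forall u : nat -> X,
    (forall e, 0 < e -> exists N, forall m k, (N <= m)%nat -> (N <= k)%nat ->
        vnorm (vadd (u m) (vopp (u k))) < e) ->
    exists l : X, forall e, 0 < e -> exists N, forall k, (N <= k)%nat ->
        vnorm (vadd (u k) (vopp l)) < e.

Definition Banach (X : NormedSpace) : Prop := complete X.

Definition in_dual {X : NormedSpace} (f : X -> R) : Prop :=
  (forall x y, f (vadd x y) = f x + f y) /\
  (forall a x, f (vscal a x) = a * f x) /\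
  (exists M, forall x, Rabs (f x) <= M * vnorm x).

Definition dual_norm {X : NormedSpace} (f : X -> R) (r : R) : Prop :=
  is_lub (fun t => exists x : X, vnorm x <= 1 /\ t = Rabs (f x)) r.

Definition dual_ball {X : NormedSpace} (f : X -> R) : Prop :=
  in_dual f /\ forall x : X, vnorm x <= 1 -> Rabs (f x) <= 1.

(* w*-slice S(B_{X^*}, x, alpha) (the side conditions x in S_X, 0<alpha<1
   are hypotheses of the theorem). *)
Definition wslice {X : NormedSpace} (x : X) (alpha : R) (f : X -> R) : Prop :=
  dual_ball f /\ f x > 1 - alpha.

Fixpoint fsum (n : nat) (g : nat -> R) : R :=
  match n with
  | O => 0
  | S k => fsum k g + g k
  end.

Definition slice_comb {X : NormedSpace} (n : nat) (lambda : nat -> R)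
  (x : nat -> X) (alpha : nat -> R) (h : X -> R) : Prop :=
  exists f : nat -> X -> R,
    (forall i, (i < n)%nat -> wslice (x i) (alpha i) (f i)) /\
    forall z : X, h z = fsum n (fun i => lambda i * f i z).

Definition dual_diam {X : NormedSpace} (C : (X -> R) -> Prop) (d : R) : Prop :=
  is_lub (fun t => exists h1 h2, C h1 /\ C h2 /\
                    dual_norm (fun z => h1 z - h2 z) t) d.

(* Since diam(C) = 2, some pair h1 = sum_i lambda_i f_i, h2 = sum_i lambda_i g_i
   of C and some w in B_X satisfy (h1 - h2)(w) > 2 - delta.  Each (f_i - g_i)(w)
   is at most 2, so the deficits lambda_i (2 - (f_i - g_i)(w)) are nonnegative and
   sum to less than delta; with delta = e * min_i lambda_i every single gap
   (f_i - g_i)(w) exceeds 2 - e.  Rescaling w to the unit sphere only enlarges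
   these positive gaps, and since each f_i, g_i lies in B_{X^*} the gap bound
   forces f_i(z) > 1 - e and g_i(-z) > 1 - e. *)

From Stdlib Require Import Reals Lra Lia Classical.
Open Scope R_scope.

Lemma is_lub_approx (E : R -> Prop) r a :
  is_lub E r -> a < r -> exists s, E s /\ a < s.
Proof.
  intros [_ Hleast] Har.
  apply NNPP; intros Hnone.
  enough (r <= a) by lra.
  apply Hleast; intros s Es.
  apply Rnot_lt_le; intros Has.
  now apply Hnone; exists s.
Qed.

Lemma fsum_ext n g h :
  (forall i, (i < n)%nat -> g i = h i) -> fsum n g = fsum n h.
Proof.
  induction n as [|n IH]; simpl; intros Hgh; [reflexivity|].
  rewrite IH, (Hgh n); auto with arith.
Qed.

Lemma fsum_scal n a g : fsum n (fun i => a * g i) = a * fsum n g.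
Proof. induction n as [|n IH]; simpl; [lra|]. rewrite IH; lra. Qed.

Lemma fsum_minus n g h : fsum n (fun i => g i - h i) = fsum n g - fsum n h.
Proof. induction n as [|n IH]; simpl; [lra|]. rewrite IH; lra. Qed.

Lemma fsum_nonneg n g :
  (forall i, (i < n)%nat -> 0 <= g i) -> 0 <= fsum n g.
Proof.
  induction n as [|n IH]; simpl; intros Hg; [lra|].
  assert (0 <= fsum n g) by (apply IH; auto with arith).
  assert (0 <= g n) by auto with arith.
  lra.
Qed.

Lemma fsum_term_le n g :
  (forall i, (i < n)%nat -> 0 <= g i) ->
  forall j, (j < n)%nat -> g j <= fsum n g.
Proof.
  induction n as [|n IH]; simpl; intros Hg j Hj; [lia|].
  assert (0 <= fsum n g) by (apply fsum_nonneg; auto with arith).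
  assert (0 <= g n) by auto with arith.
  destruct (Nat.eq_dec j n) as [->|Hjn]; [lra|].
  assert (g j <= fsum n g) by (apply IH; auto with arith; lia).
  lra.
Qed.

Lemma finite_pos_lower_bound n (l : nat -> R) :
  (forall i, (i < n)%nat -> 0 < l i) ->
  exists m, 0 < m /\ forall i, (i < n)%nat -> m <= l i.
Proof.
  induction n as [|n IH]; intros Hl.
  - exists 1; split; [lra | intros; lia].
  - destruct IH as [m [Hm Hml]]; [auto with arith|].
    assert (0 < l n) by auto with arith.
    exists (Rmin m (l n)); split; [now apply Rmin_glb_lt|].
    intros i Hi; destruct (Nat.eq_dec i n) as [->|Hin]; [apply Rmin_r|].
    apply (Rle_trans _ m); [apply Rmin_l | apply Hml; lia].
Qed.

Lemma convex_comb_near_max n (lambda d : nat -> R) c m e :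
  (forall i, (i < n)%nat -> 0 < lambda i) -> fsum n lambda = 1 ->
  (forall i, (i < n)%nat -> m <= lambda i) -> 0 < m ->
  (forall i, (i < n)%nat -> d i <= c) ->
  fsum n (fun i => lambda i * d i) > c - m * e ->
  forall i, (i < n)%nat -> d i > c - e.
Proof.
  intros Hpos Hsum Hm Hm0 Hd Hcomb i Hi.
  set (deficit j := lambda j * (c - d j)).
  assert (Hdef0 : forall j, (j < n)%nat -> 0 <= deficit j).
  { intros j Hj; unfold deficit.
    specialize (Hpos j Hj); specialize (Hd j Hj); nra. }
  assert (Htotal : fsum n deficit < m * e).
  { unfold deficit.
    rewrite (fsum_ext n _ (fun j => c * lambda j - lambda j * d j))
      by (intros; ring).
    rewrite fsum_minus, fsum_scal, Hsum; lra. }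
  pose proof (fsum_term_le n deficit Hdef0 i Hi) as Hterm.
  unfold deficit in Hterm, Htotal.
  specialize (Hm i Hi); specialize (Hd i Hi).
  assert (Hmd : m * (c - d i) < m * e).
  { assert (0 <= (lambda i - m) * (c - d i)) by (apply Rmult_le_pos; lra).
    nra. }
  apply Rmult_lt_reg_l in Hmd; lra.
Qed.

Lemma vnorm_ge0 {X : NormedSpace} (w : X) : 0 <= vnorm w.
Proof.
  assert (Hw0 : vadd w (vscal (-1) w) = vscal 0 w).
  { rewrite <- (vscal_1 X w) at 1.
    rewrite <- vscal_distr_s; f_equal; lra. }
  pose proof (vnorm_triangle X w (vscal (-1) w)) as Htri.
  rewrite Hw0, !vnorm_scal, Rabs_R0, (Rabs_left (-1)) in Htri by lra.
  lra.
Qed.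

Lemma vnorm_normalize {X : NormedSpace} (w : X) :
  w <> vzero -> vnorm (vscal (/ vnorm w) w) = 1.
Proof.
  intros Hw.
  assert (Hpos : 0 < vnorm w).
  { destruct (vnorm_ge0 w) as [|Heq]; [assumption|].
    now exfalso; apply Hw, vnorm_eq0. }
  rewrite vnorm_scal, Rabs_pos_eq by (left; now apply Rinv_0_lt_compat).
  now apply Rinv_l, Rgt_not_eq.
Qed.

Lemma in_dual_zero {X : NormedSpace} (f : X -> R) : in_dual f -> f vzero = 0.
Proof.
  intros [Hadd _]; specialize (Hadd vzero vzero).
  rewrite vadd_0 in Hadd; lra.
Qed.

Lemma in_dual_opp {X : NormedSpace} (f : X -> R) z :
  in_dual f -> f (vopp z) = - f z.
Proof.
  intros Hf; pose proof (in_dual_zero f Hf) as H0.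
  destruct Hf as [Hadd _]; specialize (Hadd z (vopp z)).
  rewrite vadd_opp, H0 in Hadd; lra.
Qed.

Lemma dual_ball_bound {X : NormedSpace} (f : X -> R) w :
  dual_ball f -> vnorm w <= 1 -> -1 <= f w <= 1.
Proof.
  intros [_ Hf] Hw; specialize (Hf w Hw).
  revert Hf; unfold Rabs; destruct Rcase_abs; lra.
Qed.

Lemma dual_diam_near {X : NormedSpace} (C : (X -> R) -> Prop) d a :
  dual_diam C d -> a < d ->
  exists h1 h2 w, C h1 /\ C h2 /\ vnorm w <= 1 /\ h1 w - h2 w > a.
Proof.
  intros Hdiam Had.
  destruct (is_lub_approx _ _ _ Hdiam Had) as [t [[h1 [h2 [C1 [C2 Hnorm]]]] Hat]].
  destruct (is_lub_approx _ _ _ Hnorm Hat) as [s [[w [Hw ->]] Has]].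
  revert Has; unfold Rabs; destruct Rcase_abs; intros Has.
  - exists h2, h1, w; repeat split; auto; lra.
  - exists h1, h2, w; repeat split; auto; lra.
Qed.

Lemma dual_ball_gap_normalize {X : NormedSpace} n (f g : nat -> X -> R) w c :
  (0 < n)%nat -> 0 <= c -> vnorm w <= 1 ->
  (forall i, (i < n)%nat -> dual_ball (f i) /\ dual_ball (g i)) ->
  (forall i, (i < n)%nat -> f i w - g i w > c) ->
  exists z, vnorm z = 1 /\
    forall i, (i < n)%nat ->
      f i z - g i z > c /\ f i z > c - 1 /\ g i (vopp z) > c - 1.
Proof.
  intros Hn Hc Hw Hball Hgap.
  assert (Hw0 : w <> vzero).
  { intros ->; specialize (Hgap O Hn).
    destruct (Hball O Hn) as [[Hf _] [Hg _]].
    rewrite (in_dual_zero _ Hf), (in_dual_zero _ Hg) in Hgap; lra. }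
  assert (HN : 1 <= / vnorm w).
  { pose proof (vnorm_ge0 w) as HN0.
    destruct HN0 as [HN0 | HN0]; [| now exfalso; apply Hw0, vnorm_eq0].
    rewrite <- Rinv_1; apply Rinv_le_contravar; auto. }
  pose proof (vnorm_normalize w Hw0) as Hz.
  set (z := vscal (/ vnorm w) w) in *.
  exists z; split; [assumption|].
  intros i Hi; destruct (Hball i Hi) as [Bf Bg].
  pose proof Bf as [[_ [Sf _]] _]; pose proof Bg as [[_ [Sg _]] _].
  assert (Hzgap : f i z - g i z > c).
  { unfold z; rewrite Sf, Sg; specialize (Hgap i Hi); nra. }
  pose proof (dual_ball_bound _ z Bf (Req_le _ _ Hz)).
  pose proof (dual_ball_bound _ z Bg (Req_le _ _ Hz)).
  rewrite (in_dual_opp _ _ (proj1 Bg)); repeat split; lra.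
Qed.

Theorem mainTheorem2 (X : NormedSpace) (HX : Banach X) (n : nat)
  (x : nat -> X) (alpha : nat -> R) (lambda : nat -> R)
  (Hx : forall i, (i < n)%nat -> vnorm (x i) = 1)
  (Halpha : forall i, (i < n)%nat -> 0 < alpha i < 1)
  (Hlambda : forall i, (i < n)%nat -> 0 < lambda i <= 1)
  (Hsum : fsum n lambda = 1)
  (Hdiam : dual_diam (slice_comb n lambda x alpha) 2) :
  forall eps, 0 < eps ->
    exists (f g : nat -> X -> R) (z : X),
      vnorm z = 1 /\
      (forall i, (i < n)%nat ->
         wslice (x i) (alpha i) (f i) /\ wslice (x i) (alpha i) (g i) /\
         f i z - g i z > 2 - eps) /\
      (forall i, (i < n)%nat ->
         f i z > 1 - eps /\ g i (vopp z) > 1 - eps).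
Proof.
  intros eps Heps.
  assert (Hn : (0 < n)%nat) by (destruct n; [simpl in Hsum; lra | lia]).
  assert (Hpos : forall i, (i < n)%nat -> 0 < lambda i) by apply Hlambda.
  destruct (finite_pos_lower_bound n lambda Hpos) as [m [Hm Hml]].
  set (e := Rmin eps 1).
  assert (He : 0 < e <= 1) by (split; [apply Rmin_glb_lt | apply Rmin_r]; lra).
  destruct (dual_diam_near _ _ (2 - m * e) Hdiam) as
    (h1 & h2 & w & [f [Sf Hh1]] & [g [Sg Hh2]] & Hw & Hgap); [nra|].
  rewrite Hh1, Hh2, <- fsum_minus in Hgap.
  rewrite (fsum_ext n _ (fun i => lambda i * (f i w - g i w))) in Hgap
    by (intros; ring).
  assert (Hgaps : forall i, (i < n)%nat -> f i w - g i w > 2 - e).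
  { apply (convex_comb_near_max n lambda _ 2 m e); auto.
    intros i Hi; destruct (Sf i Hi) as [Bf _], (Sg i Hi) as [Bg _].
    pose proof (dual_ball_bound _ _ Bf Hw); pose proof (dual_ball_bound _ _ Bg Hw).
    lra. }
  destruct (dual_ball_gap_normalize n f g w (2 - e)) as [z [Hz Hzgaps]]; auto.
  { lra. }
  { intros i Hi; split; [apply (Sf i Hi) | apply (Sg i Hi)]. }
  assert (Hee : e <= eps) by apply Rmin_l.
  exists f, g, z; split; [assumption|split]; intros i Hi;
    destruct (Hzgaps i Hi) as (? & ? & ?).
  - split; [apply (Sf i Hi) | split; [apply (Sg i Hi) | lra]].
  - split; lra.
Qed.
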